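(* Let $A:\mathbb R^n\rightrightarrows\mathbb R^n$ be maximally monotone, $F:\mathbb R^n\to\mathbb R^n$ $L$-Lipschitz ($L>0$), $T=A+F$, and assume there exist a nonempty $\mathcal S^\star\subseteq\operatorname{zer}T$ and $\rho\in(-\tfrac1{2L},\infty)$ with $\langle v,z-z^\star\rangle\ge\rho\|v\|^2$ for all $z^\star\in\mathcal S^\star$ and all $(z,v)\in\operatorname{graph}T$. Let $\gamma\in(\max\{0,-2\rho\},\tfrac1L]$, $\delta\in(-\tfrac\gamma2,\rho]$ and $\bar\alpha\in(0,1+\tfrac{2\delta}{\gamma})$, let $H=\mathrm{id}-\gamma F$, and for $z^0\in\mathbb R^n$ generate $$\bar z^k=(\mathrm{id}+\gamma A)^{-1}(z^k-\gamma Fz^k),\qquad z^{k+1}=z^k+\bar\alpha(H\bar z^k-Hz^k).$$ Then for every $z^\star\in\mathcal S^\star$ and $m\ge0$, $$\min_{k=0,\dots,m}\|H\bar z^k-Hz^k\|^2\le\frac{\|z^0-z^\star\|^2}{\kappa(m+1)},\qquad \kappa=\bar\alpha\big(1+\tfrac{2\delta}{\gamma}-\bar\alpha\big).$$ Moreover, $(\bar z^k)$ is bounded with all limit points in $\operatorname{zer}T$, and if in addition $\gamma<\tfrac1L$ and $\mathcal S^\star=\operatorname{zer}T$, then $(z^k)$ and $(\bar z^k)$ converge to the same point of $\operatorname{zer}T$.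
   Context: $\operatorname{zer}T=\{z:0\in Tz\}$, $\operatorname{graph}T=\{(z,v):v\in Tz\}$. *)

From mathcomp Require Import all_boot all_order all_algebra.
From mathcomp Require Import reals.
Set Implicit Arguments. Unset Strict Implicit. Unset Printing Implicit Defensive.
Import Order.TTheory GRing.Theory Num.Theory.
Local Open Scope ring_scope.

Section Defs.
Variables (R : realType) (n : nat).
Notation vec := 'rV[R]_n.

Definition dotp (u v : vec) : R := \sum_(i < n) u 0 i * v 0 i.
Definition enorm (u : vec) : R := Num.sqrt (dotp u u).

(* set-valued operators R^n ⇉ R^n, given by their graph: A z v  <->  v ∈ A z *)
Definition setop := vec -> vec -> Prop.

Definition monotone (A : setop) : Prop :=
  forall x u y v, A x u -> A y v -> 0 <= dotp (u - v) (x - y).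

Definition maximally_monotone (A : setop) : Prop :=
  monotone A /\
  forall B : setop, monotone B -> (forall x u, A x u -> B x u) ->
    forall x u, B x u -> A x u.

Definition lipschitz (L : R) (F : vec -> vec) : Prop :=
  forall x y, enorm (F x - F y) <= L * enorm (x - y).

Definition sum_op (A : setop) (F : vec -> vec) : setop :=
  fun z v => exists a, A z a /\ v = a + F z.

Definition zer (T : setop) : vec -> Prop := fun z => T z 0.

Definition bounded_seq (u : nat -> vec) : Prop :=
  exists M : R, forall k, enorm (u k) <= M.

Definition converges_to (u : nat -> vec) (x : vec) : Prop :=
  forall e : R, 0 < e -> exists N, forall k, (N <= k)%N -> enorm (u k - x) < e.

Definition limit_point (u : nat -> vec) (x : vec) : Prop :=
  forall e : R, 0 < e -> forall N, exists k, (N <= k)%N /\ enorm (u k - x) < e.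

End Defs.

From Pilot Require Import Defs.
From mathcomp Require Import all_boot all_order all_algebra.
From mathcomp Require Import reals.
From mathcomp Require Import ring lra.
From mathcomp Require all_classical all_analysis.
From Stdlib Require Classical_Prop.
Set Implicit Arguments. Unset Strict Implicit. Unset Printing Implicit Defensive.
Import Order.TTheory GRing.Theory Num.Theory.
Local Open Scope ring_scope.

(* Write [p k = H zbar k - H z k]. The resolvent step says exactly that
   [- p k / gamma] lies in [T zbar k], so the comonotonicity of [T] at [z*]
   (with [delta <= rho]) and the Lipschitz continuity of [F] (with
   [gamma L <= 1]) give the Fejer inequality
     |z (k+1) - z*|^2 <= |z k - z*|^2 - kappa |p k|^2.
   Summing it gives the rate and [p k -> 0]; the resolvent keeps [zbar k]
   within [(1 + gamma L) |z 0 - z*|] of [z*], and the graph of [T] is closed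
   by maximal monotonicity of [A], so limit points of [zbar] are zeros.
   If [gamma L < 1] then [|z k - zbar k| <= |p k| / (1 - gamma L) -> 0], so a
   limit point [x] of the bounded sequence [z] is a limit point of [zbar],
   hence [x] is in [zer T = S*], and Fejer monotonicity with respect to [x]
   makes [z] converge to [x]. *)

Section EuclideanGeometry.
Variables (R : realType) (n : nat).
Notation vec := 'rV[R]_n.
Implicit Types u v w : vec.

Lemma dotpC u v : dotp u v = dotp v u.
Proof. by apply: eq_bigr => i _; rewrite mulrC. Qed.

Lemma dotpDl u v w : dotp (u + v) w = dotp u w + dotp v w.
Proof. by rewrite /dotp -big_split; apply: eq_bigr => i _; rewrite !mxE mulrDl. Qed.

Lemma dotpZl (a : R) u w : dotp (a *: u) w = a * dotp u w.
Proof. by rewrite /dotp mulr_sumr; apply: eq_bigr => i _; rewrite !mxE mulrA. Qed.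

Lemma dotpNl u w : dotp (- u) w = - dotp u w.
Proof. by rewrite -scaleN1r dotpZl mulN1r. Qed.

Lemma dotpBl u v w : dotp (u - v) w = dotp u w - dotp v w.
Proof. by rewrite dotpDl dotpNl. Qed.

Lemma dotpDr u v w : dotp w (u + v) = dotp w u + dotp w v.
Proof. by rewrite dotpC dotpDl !(dotpC w). Qed.

Lemma dotpZr (a : R) u w : dotp w (a *: u) = a * dotp w u.
Proof. by rewrite dotpC dotpZl dotpC. Qed.

Lemma dotpNr u w : dotp w (- u) = - dotp w u.
Proof. by rewrite dotpC dotpNl dotpC. Qed.

Lemma dotpBr u v w : dotp w (u - v) = dotp w u - dotp w v.
Proof. by rewrite dotpDr dotpNr. Qed.

Lemma dotp0l w : dotp 0 w = 0.
Proof. by rewrite /dotp big1 // => i _; rewrite mxE mul0r. Qed.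

Lemma dotp_ge0 u : 0 <= dotp u u.
Proof. by apply: sumr_ge0 => i _; rewrite -expr2 sqr_ge0. Qed.

Lemma enorm_ge0 u : 0 <= enorm u.
Proof. exact: sqrtr_ge0. Qed.

Lemma enorm_sq u : enorm u ^+ 2 = dotp u u.
Proof. by rewrite sqr_sqrtr // dotp_ge0. Qed.

Lemma enormN u : enorm (- u) = enorm u.
Proof. by rewrite /enorm dotpNl dotpNr opprK. Qed.

Lemma enormBC u v : enorm (u - v) = enorm (v - u).
Proof. by rewrite -enormN opprB. Qed.

Lemma enormZ (a : R) u : enorm (a *: u) = `|a| * enorm u.
Proof. by rewrite /enorm dotpZl dotpZr mulrA -expr2 sqrtrM ?sqr_ge0 // sqrtr_sqr. Qed.

Lemma le_of_sqr_le (x y : R) : 0 <= y -> x ^+ 2 <= y ^+ 2 -> x <= y.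
Proof. by move=> y0 h; rewrite leNgt; apply/negP => hxy; nra. Qed.

Lemma lt_of_sqr_lt (x y : R) : 0 <= y -> x ^+ 2 < y ^+ 2 -> x < y.
Proof. by move=> y0 h; rewrite ltNge; apply/negP => hyx; nra. Qed.

Lemma cauchy_schwarz_sqr u v : dotp u v ^+ 2 <= dotp u u * dotp v v.
Proof.
set a := dotp u u; set b := dotp u v; set c := dotp v v.
have quad_ge0 t : 0 <= a * t ^+ 2 - 2 * b * t + c.
  have := dotp_ge0 (t *: u - v).
  rewrite dotpBl !dotpBr !dotpZl !dotpZr (dotpC v u) -/a -/b -/c.
  by move=> h; apply: le_trans h _; rewrite le_eqVlt; apply/orP; left; apply/eqP; ring.
have [a0|a_neq0] := eqVneq a 0.
  have [-> | b_neq0] := eqVneq b 0; first by rewrite expr0n /= a0 mul0r.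
  have := quad_ge0 ((c + 1) / (2 * b)); rewrite a0 mul0r sub0r.
  have -> : 2 * b * ((c + 1) / (2 * b)) = c + 1 by field.
  lra.
have a_gt0 : 0 < a by rewrite lt_def a_neq0 dotp_ge0.
have := quad_ge0 (b / a).
have -> : a * (b / a) ^+ 2 - 2 * b * (b / a) + c = c - b ^+ 2 / a by field.
by rewrite subr_ge0 ler_pdivrMr // mulrC.
Qed.

Lemma cauchy_schwarz u v : dotp u v <= enorm u * enorm v.
Proof.
have [uv_le0|uv_gt0] := lerP (dotp u v) 0.
  by apply: le_trans uv_le0 _; rewrite mulr_ge0 // enorm_ge0.
apply: le_of_sqr_le; first by rewrite mulr_ge0 ?enorm_ge0.
by rewrite exprMn !enorm_sq cauchy_schwarz_sqr.
Qed.

Lemma cauchy_schwarz_abs u v : `|dotp u v| <= enorm u * enorm v.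
Proof.
rewrite ler_norml cauchy_schwarz andbT.
by have := cauchy_schwarz (- u) v; rewrite enormN dotpNl; lra.
Qed.

Lemma ler_enormD u v : enorm (u + v) <= enorm u + enorm v.
Proof.
apply: le_of_sqr_le; first by rewrite addr_ge0 ?enorm_ge0.
have -> : enorm (u + v) ^+ 2 = enorm u ^+ 2 + 2 * dotp u v + enorm v ^+ 2.
  by rewrite !enorm_sq dotpDl !dotpDr (dotpC v u); ring.
by have := cauchy_schwarz u v; have := enorm_ge0 u; have := enorm_ge0 v; nra.
Qed.

Lemma ler_enormB u v : enorm (u - v) <= enorm u + enorm v.
Proof. by have := ler_enormD u (- v); rewrite enormN. Qed.

Lemma sqr_enormB_le_dotp w d :
  enorm d <= enorm w -> enorm (w - d) ^+ 2 <= 2 * dotp (w - d) w.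
Proof.
move=> dw; have dd : dotp d d <= dotp w w.
  by rewrite -!enorm_sq ler_pXn2r ?nnegrE ?enorm_ge0.
rewrite enorm_sq !dotpBl !dotpBr (dotpC d w); lra.
Qed.

End EuclideanGeometry.

Section RealSequences.
Variable R : realType.

Lemma ge0_of_ge_neg_scaled (X K : R) : 0 <= K ->
  (forall eta, 0 < eta -> eta <= 1 -> - (eta * K) <= X) -> 0 <= X.
Proof.
move=> K0 h; rewrite leNgt; apply/negP => X_lt0.
set eta := Num.min 1 (- X / (2 * (K + 1))).
have K1 : 0 < 2 * (K + 1) by lra.
have eta_gt0 : 0 < eta by rewrite lt_min ltr01 /= divr_gt0 // oppr_gt0.
have eta_le1 : eta <= 1 by rewrite ge_min lexx.
have : eta * (2 * (K + 1)) <= - X by rewrite -ler_pdivlMr // ge_min lexx orbT.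
by have := h eta eta_gt0 eta_le1; nra.
Qed.

Lemma terms_lt_of_bounded_partial_sums (a : nat -> R) (C : R) :
  (forall k, 0 <= a k) -> (forall m, \sum_(k < m) a k <= C) ->
  forall e, 0 < e -> exists N, forall k, (N <= k)%N -> a k < e.
Proof.
move=> a_ge0 sum_leC e e_gt0; apply: Classical_Prop.NNPP => no_tail.
have big_term N : exists2 k, (N <= k)%N & e <= a k.
  apply: Classical_Prop.NNPP => no_big; apply: no_tail; exists N => k Nk.
  by rewrite ltNge; apply/negP => ea; apply: no_big; exists k.
have partial_sums_grow (j : nat) : exists m, j%:R * e <= \sum_(k < m) a k.
  elim: j => [|j [m hm]]; first by exists 0%N; rewrite mul0r big_ord0.
  have [k mk ek] := big_term m.
  exists k.+1; rewrite big_ord_recr /= mulrSr mulrDl mul1r lerD //.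
  apply: le_trans hm _; rewrite (big_ord_widen _ a mk).
  rewrite [leRHS](bigID (fun i : 'I__ => (i < m)%N)) /= lerDl.
  by apply: sumr_ge0 => i _.
have C0 : 0 <= C by have := sum_leC 0%N; rewrite big_ord0.
have := archi_boundP (divr_ge0 C0 (ltW e_gt0)).
set j := Num.Def.archi_bound _ => hj.
have [m hm] := partial_sums_grow j.
have : C < j%:R * e by rewrite -ltr_pdivrMr.
by have := sum_leC m; lra.
Qed.

End RealSequences.

Section Sequences.
Variables (R : realType) (n : nat).
Notation vec := 'rV[R]_n.
Implicit Types (u w : nat -> vec) (x : vec).

Lemma limit_point_shift u w x : converges_to (fun k => u k - w k) 0 ->
  limit_point u x -> limit_point w x.
Proof.
move=> uw ux e e_gt0 N; have e2 : 0 < e / 2 by rewrite divr_gt0.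
have [N1 hN1] := uw _ e2; have [k [Nk hk]] := ux _ e2 (maxn N N1).
exists k; split; first exact: leq_trans (leq_maxl _ _) Nk.
have -> : w k - x = - (u k - w k - 0) + (u k - x) by rewrite subr0 opprB addrA subrK.
apply: le_lt_trans (ler_enormD _ _) _; rewrite enormN.
by have := hN1 k (leq_trans (leq_maxr _ _) Nk); lra.
Qed.

Lemma converges_to_shift u w x : converges_to (fun k => u k - w k) 0 ->
  converges_to u x -> converges_to w x.
Proof.
move=> uw ux e e_gt0; have e2 : 0 < e / 2 by rewrite divr_gt0.
have [N1 hN1] := uw _ e2; have [N2 hN2] := ux _ e2.
exists (maxn N1 N2) => k hk.
have -> : w k - x = - (u k - w k - 0) + (u k - x) by rewrite subr0 opprB addrA subrK.
apply: le_lt_trans (ler_enormD _ _) _; rewrite enormN.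
have := hN1 k (leq_trans (leq_maxl _ _) hk).
by have := hN2 k (leq_trans (leq_maxr _ _) hk); lra.
Qed.

Lemma fejer_converges_to u x :
  (forall k, enorm (u k.+1 - x) <= enorm (u k - x)) ->
  limit_point u x -> converges_to u x.
Proof.
move=> fejer ux e e_gt0; have [k [_ hk]] := ux e e_gt0 0%N.
exists k => j kj; rewrite -(subnKC kj); apply: le_lt_trans hk.
elim: (j - k)%N => [|d IH]; first by rewrite addn0.
by rewrite addnS; apply: le_trans (fejer _) IH.
Qed.

End Sequences.

Module BolzanoWeierstrass.
Import all_classical all_analysis.
Import numFieldNormedType.Exports.
Local Open Scope classical_set_scope.
Local Open Scope ring_scope.

Section BolzanoWeierstrass.
Variables (R : realType) (n : nat).
Notation vec := 'rV[R]_n.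

Lemma abs_coord_le_enorm (w : vec) i : `|w ord0 i| <= enorm w.
Proof.
apply: le_of_sqr_le; first exact: enorm_ge0.
rewrite enorm_sq /dotp (bigD1 i) //= real_normK ?num_real // expr2.
by rewrite lerDl sumr_ge0 // => j _; rewrite -expr2 sqr_ge0.
Qed.

Lemma sqr_enorm_le_coord (w : vec) (r : R) :
  (forall i, `|w ord0 i| <= r) -> enorm w ^+ 2 <= n%:R * r ^+ 2.
Proof.
move=> h; rewrite enorm_sq /dotp.
have -> : n%:R * r ^+ 2 = \sum_(i < n) r ^+ 2.
  by rewrite sumr_const card_ord mulr_natl.
by apply: ler_sum => i _; have := h i; rewrite ler_norml => /andP[h1 h2]; nra.
Qed.

Lemma bounded_limit_point (u : nat -> vec) (M : R) :
  (forall k, enorm (u k) <= M) -> exists x, Defs.limit_point u x.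
Proof.
move=> hM.
have cube_compact := @rV_compact R n (fun _ => `[(- M), M]%classic)
   (fun i => @segment_compact R (- M) M).
have in_cube : (u @ \oo) [set v : vec | forall i, `[(- M), M]%classic (v ord0 i)].
  exists 0%N => // k _ /= i.
  by rewrite in_itv /= -ler_norml; apply: le_trans (abs_coord_le_enorm _ _) (hM k).
have [x [_ cluster_x]] := cube_compact (u @ \oo) _ in_cube.
exists x => e e_gt0 N.
set r := e / (n.+1)%:R.
have r_gt0 : 0 < r by rewrite divr_gt0 // ltr0n.
have near_x : nbhs x [set y : vec | forall i, `|y ord0 i - x ord0 i| < r].
  apply/nbhs_ballP; exists r => // y /= hy i.
  by move: hy => [_ /(_ ord0 i)]; rewrite /ball /= distrC.
have tail : (u @ \oo) [set y | exists k, (N <= k)%N /\ u k = y].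
  by exists N => // k /= hk; exists k.
have [y [[k [Nk <-]] hy]] := cluster_x _ _ tail near_x.
exists k; split => //; apply: lt_of_sqr_lt; first exact: ltW.
apply: le_lt_trans (sqr_enorm_le_coord (r := r) _) _.
  by move=> i; rewrite !mxE; exact: ltW.
have n1 : (n.+1)%:R != 0 :> R by rewrite pnatr_eq0.
rewrite (_ : n%:R * r ^+ 2 = e ^+ 2 * (n%:R / (n.+1)%:R ^+ 2)); last by rewrite /r; field.
rewrite gtr_pMr ?exprn_gt0 // ltr_pdivrMr ?exprn_gt0 ?ltr0n // mul1r.
by rewrite -natrX ltr_nat expnS mulSn ltn_addr // expn_gt0.
Qed.

End BolzanoWeierstrass.
End BolzanoWeierstrass.

Section Operators.
Variables (R : realType) (n : nat).
Notation vec := 'rV[R]_n.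
Implicit Types (A : setop R n) (F : vec -> vec).

Definition star_comonotone (T : setop R n) (rho : R) (zs : vec) :=
  forall z v, T z v -> rho * enorm v ^+ 2 <= dotp v (z - zs).

Definition forward_step F (gamma : R) (x : vec) := x - gamma *: F x.

Lemma star_comonotone_le (T : setop R n) (delta rho : R) zs :
  delta <= rho -> star_comonotone T rho zs -> star_comonotone T delta zs.
Proof.
move=> dr hT z v Tzv; apply: le_trans (hT _ _ Tzv).
by rewrite ler_wpM2r ?sqr_ge0.
Qed.

Lemma maximally_monotone_mem A x w : maximally_monotone A ->
  (forall y u, A y u -> 0 <= dotp (u - w) (y - x)) -> A x w.
Proof.
move=> [monoA maxA] mono_xw.
have mono_ext : monotone (fun y u => A y u \/ (y = x /\ u = w)).
  move=> x1 u1 x2 u2 [h1|[-> ->]] [h2|[-> ->]].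
  - exact: monoA h1 h2.
  - exact: mono_xw.
  - by rewrite -[w - _]opprB -[x - _]opprB dotpNl dotpNr opprK; exact: mono_xw.
  - by rewrite subrr dotp0l.
by apply: (maxA _ mono_ext) => [y u h|]; [left | right].
Qed.

Lemma resolvent_sum_op A F (gamma : R) (z zb : vec) : gamma != 0 ->
  A zb (gamma^-1 *: (forward_step F gamma z - zb)) ->
  sum_op A F zb (gamma^-1 *: (forward_step F gamma z - forward_step F gamma zb)).
Proof.
move=> gamma_neq0 A_zb; exists (gamma^-1 *: (forward_step F gamma z - zb)).
by split => //; apply/rowP => i; rewrite /forward_step !mxE; field.
Qed.

Lemma forward_step_lower_bound F (L gamma : R) (x y : vec) :
  0 <= gamma -> lipschitz L F ->
  (1 - gamma * L) * enorm (x - y)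
    <= enorm (forward_step F gamma x - forward_step F gamma y).
Proof.
move=> gamma_ge0 lipF.
set d := forward_step F gamma x - forward_step F gamma y.
have xy : x - y = d + gamma *: (F x - F y).
  by apply/rowP => i; rewrite /d /forward_step !mxE; ring.
have := ler_enormD d (gamma *: (F x - F y)); rewrite -xy enormZ ger0_norm //.
by have := ler_wpM2l gamma_ge0 (lipF x y); nra.
Qed.

Lemma resolvent_nonexpansive A (gamma : R) (x y u v : vec) :
  monotone A -> 0 < gamma ->
  A u (gamma^-1 *: (x - u)) -> A v (gamma^-1 *: (y - v)) ->
  enorm (u - v) <= enorm (x - y).
Proof.
move=> monoA gamma_gt0 Au Av.
have := monoA _ _ _ _ Au Av; rewrite -scalerBr dotpZl pmulr_rge0 ?invr_gt0 //.
have -> : x - u - (y - v) = (x - y) - (u - v) by apply/rowP => i; rewrite !mxE; ring.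
rewrite dotpBl subr_ge0 -enorm_sq => uv_le.
have := le_trans uv_le (cauchy_schwarz _ _).
by have := enorm_ge0 (u - v); have := enorm_ge0 (x - y); nra.
Qed.

Lemma resolvent_dist_zer_le A F (L gamma : R) (z zb zs : vec) :
  monotone A -> 0 < gamma -> lipschitz L F -> zer (sum_op A F) zs ->
  A zb (gamma^-1 *: (forward_step F gamma z - zb)) ->
  enorm (zb - zs) <= (1 + gamma * L) * enorm (z - zs).
Proof.
move=> monoA gamma_gt0 lipF [a [A_a a_eq]] A_zb.
have A_zs : A zs (gamma^-1 *: (forward_step F gamma zs - zs)).
  have -> : gamma^-1 *: (forward_step F gamma zs - zs) = a.
    have -> : a = - F zs by apply/eqP; rewrite -addr_eq0 -a_eq.
    by apply/rowP => i; rewrite !mxE; field; exact: lt0r_neq0.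
  exact: A_a.
apply: le_trans (resolvent_nonexpansive monoA gamma_gt0 A_zb A_zs) _.
have -> : forward_step F gamma z - forward_step F gamma zs
          = (z - zs) - gamma *: (F z - F zs).
  by apply/rowP => i; rewrite !mxE; ring.
apply: le_trans (ler_enormB _ _) _; rewrite enormZ (ger0_norm (ltW gamma_gt0)).
by have := ler_wpM2l (ltW gamma_gt0) (lipF z zs); lra.
Qed.

Lemma dotp_perturb_ge (b c r s : vec) (M eta : R) :
  0 <= M -> 0 <= eta -> eta <= 1 -> enorm r <= M * eta -> enorm s <= eta ->
  0 <= dotp (c + r) (b - s) -> - (eta * (M * enorm b + enorm c + M)) <= dotp c b.
Proof.
move=> M_ge0 eta_ge0 eta_le1 r_le s_le.
rewrite dotpDl !dotpBr => perturbed_ge0.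
move: (cauchy_schwarz_abs c s) (cauchy_schwarz_abs r b) (cauchy_schwarz_abs r s).
rewrite !ler_norml => /andP[cs _] /andP[_ rb] /andP[rs _].
have : enorm c * enorm s <= enorm c * eta by rewrite ler_wpM2l ?enorm_ge0.
have : enorm r * enorm b <= M * eta * enorm b by rewrite ler_wpM2r ?enorm_ge0.
have : enorm r * enorm s <= M * eta * eta by apply: ler_pM; rewrite ?enorm_ge0.
have : M * eta * eta <= M * eta by rewrite ler_piMr ?mulr_ge0.
lra.
Qed.

Lemma zer_of_limit_point A F (L : R) (zb v : nat -> vec) (x : vec) :
  maximally_monotone A -> 0 <= L -> lipschitz L F ->
  (forall k, sum_op A F (zb k) (v k)) -> converges_to v 0 ->
  limit_point zb x -> zer (sum_op A F) x.
Proof.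
move=> maxA L_ge0 lipF graph_v v_to0 zb_x.
suff A_x : A x (- F x) by exists (- F x); rewrite addNr.
apply: maximally_monotone_mem => // y u A_yu; rewrite opprK.
apply: (@ge0_of_ge_neg_scaled _ _ ((L + 1) * enorm (y - x) + enorm (u + F x) + (L + 1))).
  by rewrite !addr_ge0 ?mulr_ge0 ?enorm_ge0 ?addr_ge0.
move=> eta eta_gt0 eta_le1.
have [N hN] := v_to0 eta eta_gt0.
have [k [Nk zb_k]] := zb_x eta eta_gt0 N.
have [a [A_a v_k]] := graph_v k.
apply: (@dotp_perturb_ge _ _ (F (zb k) - F x - v k) (zb k - x)) => //.
- by rewrite addr_ge0.
- exact: ltW.
- apply: le_trans (ler_enormB _ _) _; rewrite mulrDl mul1r lerD //.
    by apply: le_trans (lipF _ _) _; rewrite ler_wpM2l // ltW.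
  by have := hN k Nk; rewrite subr0 => /ltW.
- exact: ltW.
have -> : u + F x + (F (zb k) - F x - v k) = u - a.
  by rewrite v_k; apply/rowP => i; rewrite !mxE; ring.
have -> : y - x - (zb k - x) = y - zb k by apply/rowP => i; rewrite !mxE; ring.
exact: maxA.1 _ _ _ _ A_yu A_a.
Qed.

Section FejerStep.
Variables (A : setop R n) (F : vec -> vec) (L gamma delta alpha : R).
Variables (zs z zb : vec).
Hypotheses (gamma_gt0 : 0 < gamma) (gammaL_le1 : gamma * L <= 1).
Hypotheses (lipF : lipschitz L F) (alpha_ge0 : 0 <= alpha).
Hypothesis zs_comono : star_comonotone (sum_op A F) delta zs.
Hypothesis resolvent_zb : A zb (gamma^-1 *: (forward_step F gamma z - zb)).

Let p := forward_step F gamma zb - forward_step F gamma z.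

Lemma residual_dotp_resolvent : delta / gamma * enorm p ^+ 2 <= dotp (- p) (zb - zs).
Proof.
have := zs_comono (resolvent_sum_op (lt0r_neq0 gamma_gt0) resolvent_zb).
have -> : forward_step F gamma z - forward_step F gamma zb = - p by rewrite -opprB.
have ginv_gt0 : 0 < gamma^-1 by rewrite invr_gt0.
rewrite enormZ exprMn enormN dotpZl (ger0_norm (ltW ginv_gt0)).
have -> : delta * (gamma^-1 ^+ 2 * enorm p ^+ 2)
          = gamma^-1 * (delta / gamma * enorm p ^+ 2) by field; exact: lt0r_neq0.
by rewrite ler_pM2l.
Qed.

Lemma residual_dotp_step : enorm p ^+ 2 <= 2 * dotp (- p) (z - zb).
Proof.
rewrite -enormN.
have -> : - p = (z - zb) - gamma *: (F z - F zb).
  by apply/rowP => i; rewrite !mxE; ring.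
apply: sqr_enormB_le_dotp; rewrite enormZ (ger0_norm (ltW gamma_gt0)).
apply: le_trans (ler_wpM2l (ltW gamma_gt0) (lipF _ _)) _.
by rewrite mulrA ler_piMl ?enorm_ge0.
Qed.

(* The cross term [<-p, z - zs>] is split at [zb]: comonotonicity bounds the
   part [<-p, zb - zs>], the Lipschitz estimate the part [<-p, z - zb>]. *)
Lemma fejer_step :
  enorm (z + alpha *: p - zs) ^+ 2
  <= enorm (z - zs) ^+ 2 - alpha * (1 + 2 * delta / gamma - alpha) * enorm p ^+ 2.
Proof.
have h1 := residual_dotp_resolvent; have h2 := residual_dotp_step.
have -> : z + alpha *: p - zs = (zb - zs) + (z - zb) + alpha *: p.
  by apply/rowP => i; rewrite !mxE; ring.
have -> : z - zs = (zb - zs) + (z - zb) by apply/rowP => i; rewrite !mxE; ring.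
move: h1 h2; set a := zb - zs; set b := z - zb; clearbody p a b.
rewrite !enorm_sq !dotpNl !dotpDl !dotpDr !dotpZl !dotpZr.
rewrite (dotpC b a) (dotpC p a) (dotpC p b) => h1 h2.
have := ler_wpM2l alpha_ge0 h1; have := ler_wpM2l alpha_ge0 h2.
rewrite -!mulrA; nra.
Qed.

End FejerStep.
End Operators.

Section Iteration.
Variables (R : realType) (n : nat) (A : setop R n) (F : 'rV[R]_n -> 'rV[R]_n).
Variables (L gamma delta alpha : R) (z zbar : nat -> 'rV[R]_n).
Hypotheses (maxA : maximally_monotone A) (L_ge0 : 0 <= L) (lipF : lipschitz L F).
Hypotheses (gamma_gt0 : 0 < gamma) (gammaL_le1 : gamma * L <= 1).
Hypotheses (alpha_gt0 : 0 < alpha) (alpha_lt : alpha < 1 + 2 * delta / gamma).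
Hypothesis resolvent_z :
  forall k, A (zbar k) (gamma^-1 *: (forward_step F gamma (z k) - zbar k)).
Hypothesis z_succ : forall k,
  z k.+1 = z k + alpha *: (forward_step F gamma (zbar k) - forward_step F gamma (z k)).

Let T := sum_op A F.
Let kappa := alpha * (1 + 2 * delta / gamma - alpha).
Let residual k := forward_step F gamma (zbar k) - forward_step F gamma (z k).

Lemma kappa_gt0 : 0 < kappa.
Proof. by rewrite mulr_gt0 // subr_gt0. Qed.

Section Anchored.
Variable zs : 'rV[R]_n.
Hypothesis zs_comono : star_comonotone T delta zs.

Lemma fejer_iterate k :
  enorm (z k.+1 - zs) ^+ 2 <= enorm (z k - zs) ^+ 2 - kappa * enorm (residual k) ^+ 2.
Proof.
rewrite z_succ; apply: fejer_step (resolvent_z k) => //.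
- exact: gammaL_le1.
- exact: ltW.
Qed.

Lemma dist_iterate_nonincreasing k : enorm (z k.+1 - zs) <= enorm (z k - zs).
Proof.
apply: le_of_sqr_le; first exact: enorm_ge0.
have := fejer_iterate k.
by have := mulr_ge0 (ltW kappa_gt0) (sqr_ge0 (enorm (residual k))); lra.
Qed.

Lemma dist_iterate_le_init k : enorm (z k - zs) <= enorm (z 0 - zs).
Proof. by elim: k => // k IH; apply: le_trans (dist_iterate_nonincreasing k) IH. Qed.

Lemma dist_add_residuals_le m :
  enorm (z m - zs) ^+ 2 + kappa * \sum_(k < m) enorm (residual k) ^+ 2
  <= enorm (z 0 - zs) ^+ 2.
Proof.
elim: m => [|m IH]; first by rewrite big_ord0 mulr0 addr0.
by rewrite big_ord_recr /= mulrDr; have := fejer_iterate m; lra.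
Qed.

Lemma min_residual_le m :
  \big[Num.min/enorm (residual 0) ^+ 2]_(k < m.+1) enorm (residual k) ^+ 2
  <= enorm (z 0 - zs) ^+ 2 / (kappa * m.+1%:R).
Proof.
set mn := \big[_/_]_(k < m.+1) _.
have mn_le_sum : mn *+ m.+1 <= \sum_(k < m.+1) enorm (residual k) ^+ 2.
  have -> : mn *+ m.+1 = \sum_(k < m.+1) mn by rewrite sumr_const card_ord.
  by apply: ler_sum => i _; apply: bigmin_le.
have denom_gt0 : 0 < kappa * m.+1%:R by rewrite mulr_gt0 ?kappa_gt0 ?ltr0n.
rewrite ler_pdivlMr //.
have := dist_add_residuals_le m.+1; have := sqr_ge0 (enorm (z m.+1 - zs)).
by have := ler_wpM2l (ltW kappa_gt0) mn_le_sum; rewrite -mulr_natr; lra.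
Qed.

Lemma residual_to0 : converges_to residual 0.
Proof.
have sums_bounded m :
    \sum_(k < m) enorm (residual k) ^+ 2 <= enorm (z 0 - zs) ^+ 2 / kappa.
  rewrite ler_pdivlMr ?kappa_gt0 // mulrC.
  by have := dist_add_residuals_le m; have := sqr_ge0 (enorm (z m - zs)); lra.
move=> e e_gt0.
have [N hN] := terms_lt_of_bounded_partial_sums
  (fun k => sqr_ge0 (enorm (residual k))) sums_bounded (exprn_gt0 2 e_gt0).
by exists N => k Nk; rewrite subr0; apply: lt_of_sqr_lt (ltW e_gt0) (hN k Nk).
Qed.

Lemma zbar_bounded : zer T zs -> bounded_seq zbar.
Proof.
move=> zs_zer; exists (enorm zs + (1 + gamma * L) * enorm (z 0 - zs)) => k.
rewrite -(subrK zs (zbar k)) addrC; apply: le_trans (ler_enormD _ _) _.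
rewrite lerD2l; apply: le_trans (resolvent_dist_zer_le maxA.1 gamma_gt0 lipF zs_zer
  (resolvent_z k)) _.
by rewrite ler_wpM2l ?dist_iterate_le_init // addr_ge0 ?mulr_ge0 // ltW.
Qed.

Lemma zbar_limit_point_zer x : limit_point zbar x -> zer T x.
Proof.
apply: (zer_of_limit_point (L := L) (v := fun k => - (gamma^-1 *: residual k))) => //.
- move=> k /=; rewrite -scalerN opprB.
  exact: resolvent_sum_op (lt0r_neq0 gamma_gt0) (resolvent_z k).
- move=> e e_gt0.
  have [N hN] := residual_to0 (mulr_gt0 gamma_gt0 e_gt0).
  exists N => k Nk; rewrite subr0 enormN enormZ ger0_norm ?invr_ge0 ?ltW //.
  by rewrite mulrC ltr_pdivrMr // mulrC -(subr0 (residual k)) hN.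
Qed.

End Anchored.

Lemma iterates_converge zs : star_comonotone T delta zs -> gamma * L < 1 ->
  (forall x, zer T x -> star_comonotone T delta x) ->
  exists x, zer T x /\ converges_to z x /\ converges_to zbar x.
Proof.
move=> zs_comono gammaL_lt1 zer_comono.
have z_zbar_to0 : converges_to (fun k => z k - zbar k) 0.
  move=> e e_gt0; have c_gt0 : 0 < 1 - gamma * L by rewrite subr_gt0.
  have [N hN] := residual_to0 zs_comono (mulr_gt0 c_gt0 e_gt0).
  exists N => k Nk; rewrite subr0 -(ltr_pM2l c_gt0).
  apply: le_lt_trans (forward_step_lower_bound (z k) (zbar k) (ltW gamma_gt0) lipF) _.
  by have := hN k Nk; rewrite subr0 enormBC.
have [x z_x] : exists x, limit_point z x.
  apply: (@BolzanoWeierstrass.bounded_limit_point _ _ _ (enorm zs + enorm (z 0 - zs))).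
  move=> k; rewrite -(subrK zs (z k)) addrC; apply: le_trans (ler_enormD _ _) _.
  by rewrite lerD2l dist_iterate_le_init.
have x_zer := zbar_limit_point_zer zs_comono (limit_point_shift z_zbar_to0 z_x).
have z_to_x := fejer_converges_to (dist_iterate_nonincreasing (zer_comono x x_zer)) z_x.
by exists x; split; [|split; [|exact: converges_to_shift z_zbar_to0 z_to_x]].
Qed.

End Iteration.

Theorem corollary3p2 (R : realType) (n : nat)
    (A : setop R n) (F : 'rV[R]_n -> 'rV[R]_n) (L : R)
    (Sstar : 'rV[R]_n -> Prop) (rho gamma delta alpha : R)
    (z0 : 'rV[R]_n) (z zbar : nat -> 'rV[R]_n) :
  maximally_monotone A ->
  0 < L -> lipschitz L F ->
  (exists zs, Sstar zs) ->
  (forall zs, Sstar zs -> zer (sum_op A F) zs) ->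
  - (1 / (2 * L)) < rho ->
  (forall zs, Sstar zs -> forall zz v, sum_op A F zz v ->
     rho * enorm v ^+ 2 <= dotp v (zz - zs)) ->
  Num.max 0 (- (2 * rho)) < gamma -> gamma <= 1 / L ->
  - (gamma / 2) < delta -> delta <= rho ->
  0 < alpha -> alpha < 1 + 2 * delta / gamma ->
  let H := fun x => x - gamma *: F x in
  z 0%N = z0 ->
  (* zbar k = (id + gamma A)^{-1} (z k - gamma F (z k)), i.e.
     z k - gamma F (z k) ∈ zbar k + gamma A (zbar k) *)
  (forall k, A (zbar k) (gamma^-1 *: (z k - gamma *: F (z k) - zbar k))) ->
  (forall k, z k.+1 = z k + alpha *: (H (zbar k) - H (z k))) ->
  let kappa := alpha * (1 + 2 * delta / gamma - alpha) in
  [/\ (forall zs, Sstar zs -> forall m : nat,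
         \big[Num.min/enorm (H (zbar 0%N) - H (z 0%N)) ^+ 2]_(k < m.+1)
            (enorm (H (zbar k) - H (z k)) ^+ 2)
         <= enorm (z0 - zs) ^+ 2 / (kappa * m.+1%:R)),
      bounded_seq zbar,
      (forall x, limit_point zbar x -> zer (sum_op A F) x) &
      (gamma < 1 / L -> (forall x, Sstar x <-> zer (sum_op A F) x) ->
         exists x, zer (sum_op A F) x /\ converges_to z x /\ converges_to zbar x)].
Proof.
move=> maxA L_gt0 lipF [zs0 S_zs0] S_zer _ S_comono gamma_gt gamma_le _ delta_le
  alpha_gt0 alpha_lt H z_0 resolvent_z z_succ kappa.
have gamma_gt0 : 0 < gamma by move: gamma_gt; rewrite gt_max => /andP[].
have gammaL_le1 : gamma * L <= 1 by rewrite -ler_pdivlMr.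
have S_delta zs : Sstar zs -> star_comonotone (sum_op A F) delta zs.
  by move/S_comono; apply: star_comonotone_le.
have zs0_delta := S_delta _ S_zs0.
have L_ge0 := ltW L_gt0.
split.
- move=> zs /S_delta zs_delta m; rewrite -z_0.
  exact: (min_residual_le lipF gamma_gt0 gammaL_le1 alpha_gt0 alpha_lt
    resolvent_z z_succ zs_delta).
- exact: (zbar_bounded maxA L_ge0 lipF gamma_gt0 gammaL_le1 alpha_gt0 alpha_lt
    resolvent_z z_succ zs0_delta (S_zer _ S_zs0)).
- exact: (zbar_limit_point_zer maxA L_ge0 lipF gamma_gt0 gammaL_le1 alpha_gt0 alpha_lt
    resolvent_z z_succ zs0_delta).
- move=> gamma_lt S_eq.
  apply: (iterates_converge maxA L_ge0 lipF gamma_gt0 gammaL_le1 alpha_gt0 alpha_lt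
    resolvent_z z_succ zs0_delta); first by rewrite -ltr_pdivlMr.
  by move=> x /S_eq /S_delta.
Qed.
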